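(* The unitality, associativity and symmetry isomorphisms of the cartesian product on $E\mathcal M\text{-}\mathbf{SSet}$ restrict to isomorphisms for the box product $\boxtimes$ on $E\mathcal M\text{-}\mathbf{SSet}^\mu$ (e.g.\ $(X\times Y)\times Z\cong X\times(Y\times Z)$ restricts to an isomorphism $(X\boxtimes Y)\boxtimes Z\cong X\boxtimes(Y\boxtimes Z)$). This makes $E\mathcal M\text{-}\mathbf{SSet}^\mu$ a simplicial symmetric monoidal category with tensor product $\boxtimes$ and unit the terminal $E\mathcal M$-simplicial set.
   Context: $\omega=\{1,2,\dots\}$, $\mathcal M$ the monoid of injections $\omega\to\omega$, $\mathcal M_A$ those fixing $A\subset\omega$ pointwise; $A$ co-infinite if $\omega\setminus A$ is infinite. $E\mathcal M$ is the simplicial monoid with $(E\mathcal M)_n=\mathcal M^{1+n}$, pointwise multiplication, structure maps by precomposition. $E\mathcal M\text{-}\mathbf{SSet}$ is the category of simplicial sets with left $E\mathcal M$-action. $x\in X_n$ is $k$-supported on $A$ if $i_k(u).x=x$ for all $u\in\mathcal M_A$ ($i_k$ inclusion of the $(1+k)$-th factor). $X$ is mild if every $x\in X_n$ is, for each $0\le k\le n$, $k$-supported on some co-infinite set; $E\mathcal M\text{-}\mathbf{SSet}^\mu$ is the full subcategory of mild objects. The box product $X\boxtimes Y\subset X\times Y$ of mild $X,Y$ consists in degree $n$ of all $(x,y)$ such that for every $k$ there are disjoint $A_k,B_k\subset\omega$ with $A_k\cup B_k$ co-infinite, $x$ $k$-supported on $A_k$, $y$ $k$-supported on $B_k$; it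 is a mild $E\mathcal M$-simplicial subset of $X\times Y$ and functorial in $X,Y$. *)

From mathcomp Require Import all_boot.
Set Implicit Arguments. Unset Strict Implicit. Unset Printing Implicit Defensive.

Definition monotoneD (m n : nat) (f : 'I_m.+1 -> 'I_n.+1) : Prop :=
  forall i j : 'I_m.+1, i <= j -> f i <= f j.
Definition Dhom (m n : nat) := {f : 'I_m.+1 -> 'I_n.+1 | monotoneD f}.

Lemma monotoneD_id n : monotoneD (fun i : 'I_n.+1 => i).
Proof. by []. Qed.
Definition Did n : Dhom n n := exist _ _ (@monotoneD_id n).

Lemma monotoneD_comp m n p (g : Dhom n p) (f : Dhom m n) :
  monotoneD (fun i => proj1_sig g (proj1_sig f i)).
Proof. by move=> i j hij; apply: (proj2_sig g); apply: (proj2_sig f). Qed.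
Definition Dcomp m n p (g : Dhom n p) (f : Dhom m n) : Dhom m p :=
  exist _ _ (monotoneD_comp g f).

(* omega = {1,2,...} is modelled by nat = {0,1,...} (a relabelling). *)
Record Inj := MkInj { injf :> nat -> nat ; injP : injective injf }.

Definition inj_id : Inj := @MkInj id (fun x y h => h).
Lemma inj_comp_inj (u v : Inj) : injective (fun x => u (v x)).
Proof. move=> x y h; apply: (@injP v); apply: (@injP u); exact: h. Qed.
Definition inj_mul (u v : Inj) : Inj := MkInj (@inj_comp_inj u v).

Definition fixes (A : nat -> Prop) (u : Inj) : Prop := forall a, A a -> u a = a.

Definition coinfinite (A : nat -> Prop) : Prop := forall N, exists m, N <= m /\ ~ A m.

(* (EM)_n = M^{1+n}, elements are functions 'I_n.+1 -> Inj, multiplied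
   pointwise; structure maps are precomposition. *)
Record EMSSet := {
  obj :> nat -> Type;
  smap : forall m n, Dhom m n -> obj n -> obj m;
  smap_id : forall n (x : obj n), smap (Did n) x = x;
  smap_comp : forall m n p (g : Dhom n p) (f : Dhom m n) (x : obj p),
      smap (Dcomp g f) x = smap f (smap g x);
  act : forall n, ('I_n.+1 -> Inj) -> obj n -> obj n;
  act_one : forall n (x : obj n), act (fun _ => inj_id) x = x;
  act_mul : forall n (u v : 'I_n.+1 -> Inj) (x : obj n),
      act (fun i => inj_mul (u i) (v i)) x = act u (act v x);
  act_nat : forall m n (f : Dhom m n) (u : 'I_n.+1 -> Inj) (x : obj n),
      smap f (act u x) = act (fun i => u (proj1_sig f i)) (smap f x)
}.

Definition incl n (k : 'I_n.+1) (u : Inj) : 'I_n.+1 -> Inj :=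
  fun i => if i == k then u else inj_id.

Definition ksupported (X : EMSSet) n (x : X n) (k : 'I_n.+1) (A : nat -> Prop) : Prop :=
  forall u : Inj, fixes A u -> act (incl k u) x = x.

Definition mild (X : EMSSet) : Prop :=
  forall n (x : X n) (k : 'I_n.+1), exists A, coinfinite A /\ ksupported x k A.

Section Prod.
Variables X Y : EMSSet.
Definition pobj n := (X n * Y n)%type.
Definition psmap m n (f : Dhom m n) (p : pobj n) : pobj m :=
  (smap f p.1, smap f p.2).
Definition pact n (u : 'I_n.+1 -> Inj) (p : pobj n) : pobj n :=
  (act u p.1, act u p.2).
Lemma psmap_id n (p : pobj n) : psmap (Did n) p = p.
Proof. by case: p => x y; rewrite /psmap /= !smap_id. Qed.
Lemma psmap_comp m n p (g : Dhom n p) (f : Dhom m n) (q : pobj p) :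
  psmap (Dcomp g f) q = psmap f (psmap g q).
Proof. by rewrite /psmap /= !smap_comp. Qed.
Lemma pact_one n (p : pobj n) : pact (fun _ => inj_id) p = p.
Proof. by case: p => x y; rewrite /pact /= !act_one. Qed.
Lemma pact_mul n (u v : 'I_n.+1 -> Inj) (p : pobj n) :
  pact (fun i => inj_mul (u i) (v i)) p = pact u (pact v p).
Proof. by rewrite /pact /= !act_mul. Qed.
Lemma pact_nat m n (f : Dhom m n) (u : 'I_n.+1 -> Inj) (p : pobj n) :
  psmap f (pact u p) = pact (fun i => u (proj1_sig f i)) (psmap f p).
Proof. by rewrite /pact /psmap /= !act_nat. Qed.
Definition prodEM : EMSSet :=
  Build_EMSSet psmap_id psmap_comp pact_one pact_mul pact_nat.
End Prod.

Definition terminalEM : EMSSet :=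
  @Build_EMSSet (fun _ => unit) (fun _ _ _ _ => tt)
    (fun _ x => match x with tt => erefl end)
    (fun _ _ _ _ _ _ => erefl)
    (fun _ _ x => x)
    (fun _ x => erefl) (fun _ _ _ _ => erefl) (fun _ _ _ _ _ => erefl).

(* boxed X Y n p : the pair p = (x,y) in (X x Y)_n lies in (X [box] Y)_n.
   The E M-simplicial structure of X [box] Y is the one restricted from
   the cartesian product prodEM X Y. *)
Definition boxed (X Y : EMSSet) n (p : prodEM X Y n) : Prop :=
  forall k : 'I_n.+1, exists A B : nat -> Prop,
    (forall a, ~ (A a /\ B a)) /\ coinfinite (fun a => A a \/ B a) /\
    ksupported (X := X) p.1 k A /\ ksupported (X := Y) p.2 k B.

Definition assoc_map (X Y Z : EMSSet) n
  (p : prodEM (prodEM X Y) Z n) : prodEM X (prodEM Y Z) n :=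
  (p.1.1, (p.1.2, p.2)).
Definition lunit_map (X : EMSSet) n (p : prodEM terminalEM X n) : X n := p.2.
Definition runit_map (X : EMSSet) n (p : prodEM X terminalEM n) : X n := p.1.
Definition sym_map (X Y : EMSSet) n (p : prodEM X Y n) : prodEM Y X n :=
  (p.2, p.1).

(* The one substantial fact is that supports can be intersected: if x is
   k-supported on co-infinite sets A and B, it is k-supported on A ∩ B.  This
   holds for any action of the monoid of injections.  First, u.x depends only on
   the restriction of u to A: if s and t agree on A and s(ω∖A) ⊆ t(ω∖A), then
   s = t∘w with w fixing A; in general one passes through an injection whose
   image of ω∖A meets those of s and t infinitely often.  An injection fixing
   A ∩ B is then joined to the identity by a zigzag of injections agreeing
   alternately on B and on A.  With intersections, both bracketings of
   X ⊠ Y ⊠ Z amount to supports of x, y, z on three pairwise disjoint sets with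
   co-infinite union; unitality only needs the mildness of X, and symmetry is
   immediate. *)

From mathcomp Require Import all_boot.
From mathcomp Require Import boolp classical_sets functions.
Set Implicit Arguments. Unset Strict Implicit. Unset Printing Implicit Defensive.

Local Open Scope classical_set_scope.

(* [coinfinite A] is convertible to [unbounded (~` A)]. *)
Definition unbounded (P : set nat) : Prop := forall N, exists m, N <= m /\ P m.

Lemma unbounded_sub (P Q : set nat) : P `<=` Q -> unbounded P -> unbounded Q.
Proof. by move=> PQ Pinf N; have [m [Nm /PQ Qm]] := Pinf N; exists m. Qed.

Lemma coinfinite_sub (A B : set nat) : B `<=` A -> coinfinite A -> coinfinite B.
Proof. by move=> BA; apply: unbounded_sub => m nAm /BA. Qed.

Lemma injective_unbounded (f : nat -> nat) : injective f -> unbounded (range f).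
Proof.
move=> finj N; apply: contrapT => /forallNP small.
have fltN i : f i < N.
  by rewrite ltnNge; apply/negP => Nfi; apply: (small (f i)); split; last exists i.
suff : N.+1 <= N by rewrite ltnn.
rewrite -{1}(size_iota 0 N.+1) -(size_map f) -{2}(size_iota 0 N).
apply: uniq_leq_size; first by rewrite map_inj_uniq ?iota_uniq.
by move=> _ /mapP[i _ ->]; rewrite mem_iota add0n leq0n fltN.
Qed.

Lemma unbounded_choice (F : nat -> set nat) :
  (forall i, unbounded (F i)) -> exists e : nat -> nat, injective e /\ forall i, F i (e i).
Proof.
move=> Finf.
have [next nextP] := @choice (nat * nat) nat (fun iN m => iN.2 <= m /\ F iN.1 m)
  (fun iN => Finf iN.1 iN.2).
pose fix e i := next (i, if i is j.+1 then (e j).+1 else 0).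
exists e; split; last by case=> [|i]; apply: (nextP (_, _)).2.
have e_lt_succ i : e i < e i.+1 by apply: (nextP (i.+1, _)).1.
exact/incn_inj/leq_mono/(homo_ltn ltn_trans e_lt_succ).
Qed.

Lemma unbounded_image (S : set nat) (t : nat -> nat) :
  injective t -> unbounded S -> unbounded (t @` S).
Proof.
move=> tinj Sinf; have [c [cinj cS]] := unbounded_choice (fun _ : nat => Sinf).
apply: unbounded_sub (injective_unbounded (inj_comp tinj cinj)).
by move=> _ [i _ <-]; exists (c i).
Qed.

Lemma unbounded_disjoint_injections (P Q : set nat) : unbounded P -> unbounded Q ->
  exists p q : nat -> nat, [/\ injective p, injective q, forall i, P (p i),
    forall i, Q (q i) & forall i j, p i <> q j].
Proof.
move=> Pinf Qinf.
have [|e [einj eF]] := @unbounded_choice (fun i => if odd i then Q else P).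
  by move=> i; case: odd.
exists (fun i => e i.*2), (fun i => e i.*2.+1); split.
- by move=> i j /einj /double_inj.
- by move=> i j /einj [] /double_inj.
- by move=> i; have := eF i.*2; rewrite odd_double.
- by move=> i; have := eF i.*2.+1; rewrite /= odd_double.
- by move=> i j /einj /(congr1 odd); rewrite /= !odd_double.
Qed.

Lemma patch_in (A : set nat) (d f : nat -> nat) n : A n -> patch d A f n = f n.
Proof. by move=> An; rewrite patchT ?inE. Qed.

Lemma patch_notin (A : set nat) (d f : nat -> nat) n : ~ A n -> patch d A f n = d n.
Proof. by move=> nAn; rewrite patchC ?inE. Qed.

Lemma patch_injective (A : set nat) (d f : nat -> nat) : injective d -> injective f ->
  (forall m n, A m -> ~ A n -> f m <> d n) -> injective (patch d A f).
Proof.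
move=> dinj finj fd m n.
have [Am|Am] := pselect (A m); have [An|An] := pselect (A n).
- by rewrite !patch_in //; apply: finj.
- by rewrite patch_in // patch_notin // => /(fd m n Am An).
- by rewrite patch_notin // patch_in // => /esym /(fd n m An Am).
- by rewrite !patch_notin //; apply: dinj.
Qed.

Lemma Inj_ext (u v : Inj) : u =1 v -> u = v.
Proof.
case: u v => [f finj] [g ginj] /= /funext fg; subst g.
by congr MkInj; apply: Prop_irrelevance.
Qed.

Section SupportedAction.
Variables (T : Type) (op : Inj -> T -> T).
Hypothesis op_id : forall y, op inj_id y = y.
Hypothesis op_mul : forall u v y, op (inj_mul u v) y = op u (op v y).

Definition supported (x : T) (A : set nat) : Prop := forall u, fixes A u -> op u x = x.

Variable x : T.

Lemma supported_sub (A B : set nat) : A `<=` B -> supported x A -> supported x B.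
Proof. by move=> AB xA u uB; apply: xA => a /AB; apply: uB. Qed.

Lemma act_eq_of_image_sub (A : set nat) (s t : Inj) : supported x A ->
  (forall n, A n -> s n = t n) -> (s @` (~` A) `<=` t @` (~` A)) -> op s x = op t x.
Proof.
move=> xA st sAtA.
have /choice[pre preP] : forall n, exists m, ~ A n -> ~ A m /\ t m = s n.
  move=> n; have [An|nAn] := pselect (A n); first by exists n.
  by have [m nAm tm] := sAtA (s n) (ex_intro2 _ _ n nAn erefl); exists m.
pose w := patch pre A id.
have tw n : t (w n) = s n.
  rewrite /w; have [An|nAn] := pselect (A n); first by rewrite patch_in // st.
  by rewrite patch_notin //; have [] := preP n nAn.
have winj : injective w by move=> m n /(congr1 t); rewrite !tw => /injP.
have -> : s = inj_mul t (MkInj winj) by apply: Inj_ext => n /=; rewrite tw.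
by rewrite op_mul xA // => a Aa; rewrite /= /w patch_in.
Qed.

Lemma act_eq_of_common_image (A : set nat) (s t : Inj) (g : nat -> nat) :
  supported x A -> (forall n, A n -> s n = t n) -> injective g ->
  (forall i, (s @` (~` A)) (g i)) -> (forall i, (t @` (~` A)) (g i)) ->
  op s x = op t x.
Proof.
move=> xA st ginj gs gt.
have s'inj : injective (patch g A t).
  apply: patch_injective ginj (@injP t) _ => m n Am _ tmgn.
  by have [n' nAn' tn'] := gt n; apply: nAn'; rewrite (@injP t n' m) // tn'.
pose s' := MkInj s'inj.
have s'A n : A n -> s' n = t n by move=> An; rewrite /= patch_in.
have s'_image (u : Inj) : (forall i, (u @` (~` A)) (g i)) -> s' @` (~` A) `<=` u @` (~` A).
  by move=> gu _ [n nAn <-]; rewrite /= patch_notin //; apply: gu.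
have <- : op s' x = op s x.
  by apply: act_eq_of_image_sub xA _ (s'_image _ gs) => n An; rewrite s'A ?st.
exact: act_eq_of_image_sub xA s'A (s'_image _ gt).
Qed.

Lemma act_eq_of_agree (A : set nat) (s t : Inj) : coinfinite A -> supported x A ->
  (forall n, A n -> s n = t n) -> op s x = op t x.
Proof.
move=> coA xA st.
have [p [q [pinj qinj pt qs pq]]] := unbounded_disjoint_injections
  (unbounded_image (@injP t) coA) (unbounded_image (@injP s) coA).
have [c [cinj cA]] := unbounded_choice (fun _ : nat => coA).
(* r agrees with t on A and sends the points c (2 i) of ω∖A into t(ω∖A) and
   the points c (2 i + 1) into s(ω∖A). *)
pose D := range (fun i => c i.*2).
have rinj : injective (patch (patch q D p) A t).
  apply: patch_injective (@injP t) _ => [|m n Am _].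
    by apply: patch_injective qinj pinj _ => m n _ _; apply: pq.
  have [Dn|nDn] := pselect (D n).
    rewrite patch_in // => tm; have [n' nAn' tn'] := pt n.
    by apply: nAn'; rewrite (@injP t n' m) // tn'.
  rewrite patch_notin // => tm; have [n' nAn' sn'] := qs n.
  by apply: nAn'; rewrite (@injP s n' m) // sn' st.
pose r := MkInj rinj.
have rA n : A n -> r n = t n by move=> An; rewrite /= patch_in.
have r_even i : r (c i.*2) = p (c i.*2).
  by rewrite /= (patch_notin _ _ (cA _)) patch_in //; exists i.
have r_odd i : r (c i.*2.+1) = q (c i.*2.+1).
  rewrite /= (patch_notin _ _ (cA _)) patch_notin // => -[j _ /cinj /(congr1 odd)].
  by rewrite /= !odd_double.
transitivity (op r x).
  apply: (@act_eq_of_common_image A s r (fun i => q (c i.*2.+1))) => //.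
  - by move=> n An; rewrite rA ?st.
  - by move=> i j /qinj /cinj [] /double_inj.
  - by move=> i; exists (c i.*2.+1); [apply: cA | rewrite r_odd].
apply: (@act_eq_of_common_image A r t (fun i => p (c i.*2))) => //.
- by move=> i j /pinj /cinj /double_inj.
- by move=> i; exists (c i.*2); [apply: cA | rewrite r_even].
Qed.

Lemma supported_setI (A B : set nat) : coinfinite A -> coinfinite B ->
  supported x A -> supported x B -> supported x (A `&` B).
Proof.
move=> coA coB xA xB u uAB.
have [p [q [pinj qinj pA qB pq]]] :=
  unbounded_disjoint_injections coA (unbounded_image (@injP u) coB).
have uq m n : B m -> u m <> q n.
  move=> Bm umqn; have [n' nBn' un'] := qB n.
  by apply: nBn'; rewrite (@injP u n' m) // un'.
(* The zigzag u =_B v1 =_A v2 =_B v3 =_A id, where =_S is agreement on S: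
   v1 = u on B, v2 = id on A ∩ B, v3 = id on A; the new values are taken from
   ω∖A (p) and u(ω∖B) (q), which keeps all four maps injective. *)
pose w := patch q (A `&` B) id.
have winj : injective w.
  apply: patch_injective qinj (@injP inj_id) _ => m n [Am Bm] _.
  by rewrite /= -(uAB m) //; apply: uq.
have v1inj : injective (patch q B u).
  by apply: patch_injective qinj (@injP u) _ => m n Bm _; apply: uq.
have v2inj : injective (patch p A w).
  apply: patch_injective pinj winj _ => m n Am nAn.
  rewrite /w; have [ABm|nABm] := pselect ((A `&` B) m).
    by rewrite patch_in // => mpn; apply: (pA n); rewrite -mpn.
  by rewrite patch_notin // => /esym; apply: pq.
have v3inj : injective (patch p A id).
  apply: patch_injective pinj (@injP inj_id) _ => m n Am _ mpn.
  by apply: (pA n); rewrite -mpn.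
transitivity (op (MkInj v1inj) x).
  by apply: act_eq_of_agree coB xB _ => n Bn; rewrite /= patch_in.
transitivity (op (MkInj v2inj) x).
  apply: act_eq_of_agree coA xA _ => n An; rewrite /= [patch p A w n]patch_in // /w.
  have [Bn|nBn] := pselect (B n); first by rewrite !patch_in ?uAB.
  by rewrite !patch_notin // => -[].
transitivity (op (MkInj v3inj) x).
  apply: act_eq_of_agree coB xB _ => n Bn; rewrite /=.
  have [An|nAn] := pselect (A n); last by rewrite !patch_notin.
  by rewrite /w !patch_in.
rewrite -[RHS]op_id; apply: act_eq_of_agree coA xA _ => n An.
by rewrite /= patch_in.
Qed.

End SupportedAction.

Section FactorAction.
Variables (X : EMSSet) (n : nat) (k : 'I_n.+1).

Definition kact (u : Inj) : X n -> X n := act (incl k u).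

Lemma kact_id (x : X n) : kact inj_id x = x.
Proof.
rewrite /kact -[RHS]act_one; congr act.
by apply: funext => i; rewrite /incl; case: eqP.
Qed.

Lemma kact_mul u v (x : X n) : kact (inj_mul u v) x = kact u (kact v x).
Proof.
rewrite /kact -act_mul; congr act; apply: funext => i; rewrite /incl.
by case: eqP => // _; apply: Inj_ext.
Qed.

Lemma ksupported_setI (x : X n) (A B : set nat) : coinfinite A -> coinfinite B ->
  ksupported x k A -> ksupported x k B -> ksupported x k (A `&` B).
Proof. exact: (supported_setI kact_id kact_mul). Qed.

Lemma ksupported_sub (x : X n) (A B : set nat) :
  A `<=` B -> ksupported x k A -> ksupported x k B.
Proof. exact: (@supported_sub _ kact). Qed.

End FactorAction.

Lemma ksupported_pair (X Y : EMSSet) n (p : prodEM X Y n) k A :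
  ksupported p k A <-> ksupported p.1 k A /\ ksupported p.2 k A.
Proof.
case: p => x y; split=> [xyA | [xA yA] u uA]; last by rewrite /= /pact /= xA ?yA.
by split=> u /xyA [].
Qed.

Section BoxProduct.
Variables (X Y Z : EMSSet) (n : nat).

Lemma boxed_sym (p : prodEM X Y n) : boxed p -> boxed (sym_map p).
Proof.
move=> pbox k; have [A [B [AB [coAB [pA pB]]]]] := pbox k.
exists B, A; split; first by move=> a [Ba Aa]; apply: (AB a).
by split=> //; apply: coinfinite_sub coAB => a [Ba|Aa]; [right|left].
Qed.

Lemma boxed_terminal_l : mild X -> forall p : prodEM terminalEM X n, boxed p.
Proof.
move=> mX p k; have [A [coA pA]] := mX n p.2 k.
exists set0, A; split; first by move=> a [].
by split; first by apply: coinfinite_sub coA => a [].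
Qed.

Lemma boxed_terminal_r : mild X -> forall p : prodEM X terminalEM n, boxed p.
Proof.
move=> mX p k; have [A [coA pA]] := mX n p.1 k.
exists A, set0; split; first by move=> a [].
by split; first by apply: coinfinite_sub coA => a [].
Qed.

Definition assoc_inv (q : prodEM X (prodEM Y Z) n) : prodEM (prodEM X Y) Z n :=
  ((q.1, q.2.1), q.2.2).

Lemma boxed_assoc_snd (p : prodEM (prodEM X Y) Z n) : boxed p -> boxed (assoc_map p).2.
Proof.
move=> pbox k; have [C [D [CD [coCD [/ksupported_pair[_ yC] zD]]]]] := pbox k.
by exists C, D.
Qed.

Lemma boxed_assoc_inv_fst (q : prodEM X (prodEM Y Z) n) : boxed q -> boxed (assoc_inv q).1.
Proof.
move=> qbox k; have [A [E [AE [coAE [xA /ksupported_pair[yE _]]]]]] := qbox k.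
by exists A, E.
Qed.

Lemma boxed_assoc (p : prodEM (prodEM X Y) Z n) :
  boxed p.1 -> boxed p -> boxed (assoc_map p).
Proof.
move=> xy xyz k.
have [A [B [AB [coAB [xA yB]]]]] := xy k.
have [C [D [CD [coCD [/ksupported_pair[xC yC] zD]]]]] := xyz k.
have coB : coinfinite B by apply: coinfinite_sub coAB => a Ba; right.
have coC : coinfinite C by apply: coinfinite_sub coCD => a Ca; left.
exists (A `&` C), ((B `&` C) `|` D); split.
  by move=> a [[Aa Ca] [[Ba _]|Da]]; [apply: (AB a) | apply: (CD a)].
split; first by apply: coinfinite_sub coCD => a [[_ Ca]|[[_ Ca]|Da]]; [left|left|right].
split; first by apply: ksupported_setI => //; apply: coinfinite_sub coAB => a Aa; left.
apply/ksupported_pair; split.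
  by apply: ksupported_sub (ksupported_setI coB coC yB yC) => a; left.
by apply: ksupported_sub zD => a; right.
Qed.

Lemma boxed_assoc_inv (q : prodEM X (prodEM Y Z) n) :
  boxed q.2 -> boxed q -> boxed (assoc_inv q).
Proof.
move=> yz xyz k.
have [A [E [AE [coAE [xA /ksupported_pair[yE zE]]]]]] := xyz k.
have [C [D [CD [coCD [yC zD]]]]] := yz k.
have coE : coinfinite E by apply: coinfinite_sub coAE => a Ea; right.
have coD : coinfinite D by apply: coinfinite_sub coCD => a Da; right.
exists (A `|` (E `&` C)), (E `&` D); split.
  by move=> a [[Aa|[_ Ca]] [Ea Da]]; [apply: (AE a) | apply: (CD a)].
split; first by apply: coinfinite_sub coAE => a [[Aa|[Ea _]]|[Ea _]]; [left|right|right].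
split; last exact: ksupported_setI.
apply/ksupported_pair; split; first by apply: ksupported_sub xA => a; left.
apply: ksupported_sub (ksupported_setI coE _ yE yC) => [a|]; first by right.
by apply: coinfinite_sub coCD => a Ca; left.
Qed.

End BoxProduct.

Theorem proposition2p18 :
  forall X Y Z : EMSSet, mild X -> mild Y -> mild Z ->
  (* associativity: (X x Y) x Z ~= X x (Y x Z) restricts to
     (X [box] Y) [box] Z ~= X [box] (Y [box] Z) *)
  (forall n (p : prodEM (prodEM X Y) Z n),
      (boxed p.1 /\ boxed p) <->
      (boxed (assoc_map p).2 /\ boxed (assoc_map p))) /\
  (* left unitality: 1 x X ~= X restricts to 1 [box] X ~= X *)
  (forall n (x : X n), exists p : prodEM terminalEM X n,
      boxed p /\ lunit_map p = x) /\
  (forall n (p : prodEM terminalEM X n), boxed p) /\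
  (* right unitality: X x 1 ~= X restricts to X [box] 1 ~= X *)
  (forall n (x : X n), exists p : prodEM X terminalEM n,
      boxed p /\ runit_map p = x) /\
  (forall n (p : prodEM X terminalEM n), boxed p) /\
  (* symmetry: X x Y ~= Y x X restricts to X [box] Y ~= Y [box] X *)
  (forall n (p : prodEM X Y n), boxed p <-> boxed (sym_map p)).
Proof.
move=> X Y Z mX _ _; split; [|split; [|split; [|split; [|split]]]].
- move=> n [[x y] z]; split=> [[xy xyz] | [yz xyz]].
    by split; [apply: boxed_assoc_snd xyz | apply: boxed_assoc].
  by split; [apply: boxed_assoc_inv_fst xyz | apply: (boxed_assoc_inv yz)].
- by move=> n x; exists (tt, x); split; first exact: boxed_terminal_l.
- by move=> n; apply: boxed_terminal_l.
- by move=> n x; exists (x, tt); split; first exact: boxed_terminal_r.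
- by move=> n; apply: boxed_terminal_r.
- by move=> n [x y]; split; apply: boxed_sym.
Qed.
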